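(* Let $M\in\mathbf{F}_q[t]$ have degree $d\ge1$, $\chi$ a non-trivial Dirichlet character mod $M$ and $k\ge2$. Then for $n\ge2$, $$\sum_{n_1+n_2=n}Z_{k-1}(n_1,\chi)Z_1(n_2,\chi)=\frac{(-1)^kk}{(k-1)!}\Bigg\{\sum_{j=1}^{d_\chi}m_j(\chi)^k\frac{\alpha_j(\chi)^n(\log n)^{k-1}}n+O\Big(d^k\Big(k+\frac1{\gamma(\chi)}\Big)\frac{q^{n/2}(\log n)^{k-2}}n\Big)\Bigg\},$$ with an absolute implied constant.
   Context: For $\chi\ne\chi_0$ mod $M$, $\mathcal{L}(u,\chi)$ (with $\mathcal{L}(q^{-s},\chi)=\sum_{a\text{ monic}}\chi(a)q^{-s\deg a}$) is a polynomial of degree $\le d-1$; let $\alpha_j(\chi)=\sqrt qe^{i\gamma_j(\chi)}$, $\gamma_j(\chi)\in(-\pi,\pi)\setminus\{0\}$, $1\le j\le d_\chi$, be its distinct non-real inverse zeros of absolute value $\sqrt q$, with multiplicities $m_j(\chi)$. $\gamma(\chi)=\min_{1\le i\ne j\le d_\chi}\{|\gamma_i(\chi)-\gamma_j(\chi)|,|\gamma_i(\chi)|,|\pi-\gamma_i(\chi)|\}$. For $\ell\ge1$, $Z_\ell(n,\chi)=\frac{(-1)^\ell}{(\ell-1)!}\sum_{j=1}^{d_\chi}m_j(\chi)^\ell\frac{\alpha_j(\chi)^n(\log n)^{\ell-1}}n$. *)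

From HB Require Import structures.
From mathcomp Require Import all_boot all_order all_algebra.
From Stdlib Require Import Reals List Factorial.
Set Implicit Arguments. Unset Strict Implicit. Unset Printing Implicit Defensive.

Open Scope R_scope.

Definition Cx : Type := (R * R)%type.
Definition C0 : Cx := (0, 0).
Definition C1 : Cx := (1, 0).
Definition Cadd (a b : Cx) : Cx := (fst a + fst b, snd a + snd b).
Definition Copp (a : Cx) : Cx := (- fst a, - snd a).
Definition Csub (a b : Cx) : Cx := Cadd a (Copp b).
Definition Cmul (a b : Cx) : Cx :=
  (fst a * fst b - snd a * snd b, fst a * snd b + snd a * fst b).
Fixpoint Cpow (a : Cx) (n : nat) : Cx :=
  match n with O => C1 | S m => Cmul a (Cpow a m) end.
Definition Cscale (r : R) (a : Cx) : Cx := (r * fst a, r * snd a).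
Definition Cnorm (a : Cx) : R := sqrt (fst a * fst a + snd a * snd a).

Fixpoint peval (Q : list Cx) (u : Cx) : Cx :=
  match Q with nil => C0 | c :: Q' => Cadd c (Cmul u (peval Q' u)) end.

Section Chars.
Variable F : finFieldType.

Definition is_dirichlet_char (M : {poly F}) (chi : {poly F} -> Cx) : Prop :=
  (forall a b : {poly F}, chi (GRing.mul a b) = Cmul (chi a) (chi b)) /\
  (forall a b : {poly F}, modp a M = modp b M -> chi a = chi b) /\
  (forall a : {poly F}, chi a <> C0 <-> coprimep a M).

Definition nontrivial_char (M : {poly F}) (chi : {poly F} -> Cx) : Prop :=
  exists a : {poly F}, coprimep a M /\ chi a <> C1.

Local Open Scope ring_scope.
Definition monic_of (m : nat) (f : {ffun 'I_m -> F}) : {poly F} :=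
  'X^m + \sum_(i < m) (f i)%:P * 'X^i.
Local Close Scope ring_scope.

(* coefficient of u^m in L(u,chi): sum of chi(a) over monic a of degree m *)
Definition Lcoef (chi : {poly F} -> Cx) (m : nat) : Cx :=
  \big[Cadd/C0]_(f : {ffun 'I_m -> F}) chi (monic_of f).

(* L(u,chi) = sum_{m <= d-1} Lcoef chi m u^m  (for chi non-trivial mod M of
   degree d, Lcoef chi m = 0 for m >= d, so this is the whole series) *)
Definition Lpoly (chi : {poly F} -> Cx) (d : nat) (u : Cx) : Cx :=
  \big[Cadd/C0]_(m < d) Cmul (Lcoef chi m) (Cpow u m).

End Chars.

Definition is_inv_zero (P : Cx -> Cx) (alpha : Cx) : Prop :=
  exists u : Cx, Cmul alpha u = C1 /\ P u = C0.

Definition inv_zero_mult (P : Cx -> Cx) (alpha : Cx) (m : nat) : Prop :=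
  exists Q : list Cx,
    (forall u : Cx, P u = Cmul (Cpow (Csub C1 (Cmul alpha u)) m) (peval Q u)) /\
    (forall u : Cx, Cmul alpha u = C1 -> peval Q u <> C0).

Definition alpha_of (q : R) (g : R) : Cx := (sqrt q * cos g, sqrt q * sin g).

(* zs : list of pairs (gamma_j, m_j) enumerating the distinct non-real inverse
   zeros of P of absolute value sqrt q, with their multiplicities *)
Definition zero_data (P : Cx -> Cx) (q : R) (zs : list (R * nat)) : Prop :=
  NoDup (map fst zs) /\
  (forall g m, In (g, m) zs ->
      - PI < g < PI /\ g <> 0 /\
      is_inv_zero P (alpha_of q g) /\ inv_zero_mult P (alpha_of q g) m) /\
  (forall a : Cx, is_inv_zero P a -> Cnorm a = sqrt q -> snd a <> 0 ->
      exists g m, In (g, m) zs /\ a = alpha_of q g).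

(* gamma(chi) = min over i<>j of |g_i-g_j|, and over i of |g_i|, |pi-g_i|
   (literal reading of the paper); convention gamma = PI if d_chi = 0. *)
Definition gamma_vals (gs : list R) : list R :=
  flat_map (fun x => Rabs x :: Rabs (PI - x) ::
     flat_map (fun y => if Req_EM_T x y then nil else (Rabs (x - y) :: nil)) gs) gs.

Definition gamma_min (zs : list (R * nat)) : R :=
  match gamma_vals (map fst zs) with
  | nil => PI
  | v :: vs => fold_right Rmin v vs
  end.

Definition Zsum (q : R) (zs : list (R * nat)) (l n : nat) : Cx :=
  Cscale ((-1) ^ l / INR (fact (l - 1)))
    (fold_right Cadd C0
       (map (fun p => Cscale (INR (snd p) ^ l * ln (INR n) ^ (l - 1) / INR n)
                             (Cpow (alpha_of q (fst p)) n)) zs)).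

From Pilot Require Import Defs.
From HB Require Import structures.
From mathcomp Require Import all_boot all_order all_algebra.
From Stdlib Require Import Reals List Factorial.
Open Scope R_scope.
From Stdlib Require Import Lra Lia Classical.
From mathcomp Require Import zify Rstruct complex.
From Coquelicot Require Complex Rcomplements.
Import Pilot.Defs.

(* Write k = p + 2, L = ln n, and w(m) = (ln m)^p / (m (n - m)).  Expanding
   both factors, the convolution is (-1)^p / p! times a double sum over pairs
   of zeros (a, b) of  m_a^(p+1) m_b sum_(n1 < n) w(n1) alpha_a^n1 alpha_b^(n-n1).
   - Diagonal pairs a = b.  The inner sum is alpha_a^n sum w, and by partial
     fractions n sum w = sum (ln m)^p / m + sum (ln m)^p / (n - m); comparing
     with telescoping sums gives (p+1) n sum w = (p+2) L^(p+1) + O(k^2 L^p),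
     which produces the main term.
   - Off-diagonal pairs.  alpha_a^n1 alpha_b^(n-n1) = alpha_b^n z^n1 with
     z = e^(i (g_a - g_b)); Abel summation bounds |1 - z| |sum w(n1) z^n1| by
     the endpoint values and the total variation of w, i.e. by 8 L^p / n, and
     |1 - z| >= 2 gamma(chi) / 5 by the definition of gamma(chi).
   - The inverse zeros 1/alpha_j are distinct roots of multiplicity >= m_j of
     L(u, chi), a nonzero polynomial (constant term chi(1) <> 0) of degree
     < d, so sum_j m_j <= d.  Hence sum_j m_j^(p+2) and sum_(i,j) m_i^(p+1) m_j
     are at most d^(p+2), and the theorem follows with K = 20.
   The file develops, in this order: finite sums of complex numbers; real
   estimates for logarithmic sums and the weight w; Abel summation and the
   trigonometric gap estimate; properties of gamma(chi); the pair estimates;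
   the multiplicity bound (via polynomials over R[i]); the assembly. *)

Definition csum {A} (l : list A) (f : A -> Cx) : Cx := fold_right Cadd C0 (map f l).
Definition rsum {A} (l : list A) (f : A -> R) : R := fold_right Rplus 0 (map f l).

Ltac cx_ring := unfold csum, rsum, Csub, Cadd, Copp, Cmul, Cscale, C0, C1;
  apply injective_projections; simpl; ring.

Lemma csum_cons {A} (a : A) l f : csum (a :: l) f = Cadd (f a) (csum l f).
Proof. reflexivity. Qed.

Lemma rsum_cons {A} (a : A) l f : rsum (a :: l) f = f a + rsum l f.
Proof. reflexivity. Qed.

Lemma csum_app {A} (l1 l2 : list A) f : csum (List.app l1 l2) f = Cadd (csum l1 f) (csum l2 f).
Proof. induction l1 as [|a l1 IH]; [cx_ring|]. rewrite /= !csum_cons IH. cx_ring. Qed.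

Lemma rsum_app {A} (l1 l2 : list A) f : rsum (List.app l1 l2) f = rsum l1 f + rsum l2 f.
Proof. induction l1 as [|a l1 IH]; [rewrite /rsum /=; ring|]. rewrite /= !rsum_cons IH. ring. Qed.

Lemma csum_ext_in {A} (l : list A) f g :
  (forall x, In x l -> f x = g x) -> csum l f = csum l g.
Proof.
  induction l as [|a l IH]; intros H; [reflexivity|].
  rewrite !csum_cons H ?IH; [reflexivity| |now left]. intros; apply H; now right.
Qed.

Lemma rsum_ext_in {A} (l : list A) f g :
  (forall x, In x l -> f x = g x) -> rsum l f = rsum l g.
Proof.
  induction l as [|a l IH]; intros H; [reflexivity|].
  rewrite !rsum_cons H ?IH; [reflexivity| |now left]. intros; apply H; now right.
Qed.

Lemma rsum_le_in {A} (l : list A) f g :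
  (forall x, In x l -> f x <= g x) -> rsum l f <= rsum l g.
Proof.
  induction l as [|a l IH]; intros H; [rewrite /rsum /=; lra|].
  rewrite !rsum_cons. apply Rplus_le_compat; [apply H; now left|].
  apply IH; intros; apply H; now right.
Qed.

Lemma rsum_ge0 {A} (l : list A) f : (forall x, In x l -> 0 <= f x) -> 0 <= rsum l f.
Proof.
  intros H. apply Rle_trans with (rsum l (fun _ => 0)); [|exact: rsum_le_in].
  clear H; induction l as [|a l IH]; [rewrite /rsum /=; lra|]. rewrite rsum_cons; lra.
Qed.

Lemma rsum_scale {A} (l : list A) c f : rsum l (fun x => c * f x) = c * rsum l f.
Proof. induction l as [|a l IH]; [rewrite /rsum /=; ring|]. rewrite !rsum_cons IH. ring. Qed.

Lemma rsum_add {A} (l : list A) f g : rsum l (fun x => f x + g x) = rsum l f + rsum l g.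
Proof. induction l as [|a l IH]; [rewrite /rsum /=; ring|]. rewrite !rsum_cons IH. ring. Qed.

Lemma rsum_sub {A} (l : list A) f g : rsum l (fun x => f x - g x) = rsum l f - rsum l g.
Proof. induction l as [|a l IH]; [rewrite /rsum /=; ring|]. rewrite !rsum_cons IH. ring. Qed.

Lemma csum_scale {A} (l : list A) c f :
  csum l (fun x => Cscale c (f x)) = Cscale c (csum l f).
Proof. induction l as [|a l IH]; [cx_ring|]. rewrite !csum_cons IH. cx_ring. Qed.

Lemma csum_scale_const {A} (l : list A) c f X :
  csum l (fun x => Cscale (c * f x) X) = Cscale (c * rsum l f) X.
Proof. induction l as [|a l IH]; [cx_ring|]. rewrite csum_cons rsum_cons IH. cx_ring. Qed.

Lemma csum_add {A} (l : list A) f g :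
  csum l (fun x => Cadd (f x) (g x)) = Cadd (csum l f) (csum l g).
Proof. induction l as [|a l IH]; [cx_ring|]. rewrite !csum_cons IH. cx_ring. Qed.

Lemma csum_sub {A} (l : list A) f g :
  csum l (fun x => Csub (f x) (g x)) = Csub (csum l f) (csum l g).
Proof. induction l as [|a l IH]; [cx_ring|]. rewrite !csum_cons IH. cx_ring. Qed.

Lemma csum_mull {A} (l : list A) a f : Cmul a (csum l f) = csum l (fun x => Cmul a (f x)).
Proof. induction l as [|b l IH]; [cx_ring|]. rewrite !csum_cons -IH. cx_ring. Qed.

Lemma csum_mulr {A} (l : list A) a f : Cmul (csum l f) a = csum l (fun x => Cmul (f x) a).
Proof. induction l as [|b l IH]; [cx_ring|]. rewrite !csum_cons -IH. cx_ring. Qed.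

Lemma csum_swap {A B} (l1 : list A) (l2 : list B) f :
  csum l1 (fun x => csum l2 (f x)) = csum l2 (fun y => csum l1 (fun x => f x y)).
Proof.
  induction l1 as [|a l1 IH].
  - induction l2 as [|b l2 IH2]; [reflexivity|]. rewrite csum_cons -IH2. cx_ring.
  - rewrite csum_cons IH.
    by rewrite -csum_add.
Qed.

Lemma csum_split (zs : list (R * nat)) (f : R * nat -> Cx) a :
  NoDup (map fst zs) -> In a zs ->
  csum zs f = Cadd (f a) (csum zs (fun b => if Req_EM_T (fst b) (fst a) then C0 else f b)).
Proof.
  induction zs as [|b zs IH]; intros hnd hin; [destruct hin|].
  simpl in hnd. inversion hnd as [|x y hni hnd' e]; subst. rewrite !csum_cons.
  destruct hin as [eb|hin].
  - rewrite -eb. destruct (Req_EM_T (fst b) (fst b)) as [e1|ne]; [|congruence].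
    rewrite (csum_ext_in zs _ f); [cx_ring|].
    intros x hx. destruct (Req_EM_T (fst x) (fst b)) as [e|]; [|reflexivity].
    exfalso. apply hni. rewrite -e. exact: in_map.
  - destruct (Req_EM_T (fst b) (fst a)) as [e|ne].
    + exfalso; apply hni; rewrite e; exact: in_map.
    + rewrite (IH hnd' hin). cx_ring.
Qed.

Lemma Cnorm_Cmod (a : Cx) : Cnorm a = Complex.Cmod a.
Proof. unfold Cnorm, Complex.Cmod. f_equal. ring. Qed.

Lemma Cnorm_ge0 a : 0 <= Cnorm a.
Proof. rewrite Cnorm_Cmod. apply Complex.Cmod_ge_0. Qed.

Lemma Cnorm_add a b : Cnorm (Cadd a b) <= Cnorm a + Cnorm b.
Proof. rewrite !Cnorm_Cmod. exact (Complex.Cmod_triangle a b). Qed.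

Lemma Cnorm_mul a b : Cnorm (Cmul a b) = Cnorm a * Cnorm b.
Proof. rewrite !Cnorm_Cmod. exact (Complex.Cmod_mult a b). Qed.

Lemma Cnorm_scale r a : Cnorm (Cscale r a) = Rabs r * Cnorm a.
Proof.
  unfold Cnorm, Cscale; simpl.
  replace (r * fst a * (r * fst a) + r * snd a * (r * snd a)) with
    ((r * r) * (fst a * fst a + snd a * snd a)) by ring.
  rewrite sqrt_mult_alt; [|nra]. f_equal. apply sqrt_Rsqr_abs.
Qed.

Lemma Cnorm_C0 : Cnorm C0 = 0.
Proof. unfold Cnorm, C0; simpl. rewrite Rmult_0_l Rplus_0_l. apply sqrt_0. Qed.

Lemma Cnorm_sub a b : Cnorm (Csub a b) <= Cnorm a + Cnorm b.
Proof.
  apply: Rle_trans; [apply Cnorm_add|].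
  have -> : Cnorm (Copp b) = Cnorm b by unfold Cnorm, Copp; simpl; f_equal; ring.
  lra.
Qed.

Lemma Cnorm_csum {A} (l : list A) f : Cnorm (csum l f) <= rsum l (fun x => Cnorm (f x)).
Proof.
  induction l as [|a l IH]; [rewrite /csum /rsum /= Cnorm_C0; lra|].
  rewrite csum_cons rsum_cons. apply: Rle_trans; [apply Cnorm_add|]. lra.
Qed.
Lemma INR_leq m k : (m <= k)%nat -> INR m <= INR k.
Proof. intros h. apply le_INR. apply/leP. exact h. Qed.

Lemma INR_ge1 m : (1 <= m)%nat -> 1 <= INR m.
Proof. exact: INR_leq. Qed.

Lemma in_seq_bounds m a k : In m (List.seq a k) -> (a <= m)%nat /\ (m < a + k)%nat.
Proof. intros h. apply in_seq in h. lia. Qed.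

Lemma telescope_le (a k : nat) (u f : nat -> R) :
  (forall m, In m (List.seq a k) -> u m <= f (S m) - f m) ->
  rsum (List.seq a k) u <= f (a + k)%nat - f a.
Proof.
  revert a; induction k as [|k IH]; intros a H.
  - rewrite addn0 /rsum /=; lra.
  - rewrite /= rsum_cons.
    have h1 := H a (or_introl (Logic.eq_refl _)).
    have h2 := IH (S a) (fun m hm => H m (or_intror hm)).
    replace (a + S k)%nat with (S a + k)%nat by lia. lra.
Qed.

Lemma telescope_ge (a k : nat) (u f : nat -> R) :
  (forall m, In m (List.seq a k) -> f (S m) - f m <= u m) ->
  f (a + k)%nat - f a <= rsum (List.seq a k) u.
Proof.
  revert a; induction k as [|k IH]; intros a H.
  - rewrite addn0 /rsum /=; lra.
  - rewrite /= rsum_cons.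
    have h1 := H a (or_introl (Logic.eq_refl _)).
    have h2 := IH (S a) (fun m hm => H m (or_intror hm)).
    replace (a + S k)%nat with (S a + k)%nat by lia. lra.
Qed.

Lemma rsum_reflect k (f : nat -> R) :
  rsum (List.seq 1 k) (fun m => f (k + 1 - m)%nat) = rsum (List.seq 1 k) f.
Proof.
  have rev_sum : forall l : list nat, rsum (rev l) f = rsum l f.
  { induction l as [|a l IH]; [reflexivity|].
    rewrite /= rsum_app IH rsum_cons /rsum /=. ring. }
  have map_rev : forall k, map (fun m => (k + 1 - m)%nat) (List.seq 1 k) = rev (List.seq 1 k).
  { induction k0 as [|k0 IH]; [reflexivity|].
    rewrite -[in RHS](Nat.add_1_r k0) seq_app rev_app_distr /= -seq_shift map_map -IH.
    f_equal; lia. }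
  by rewrite -rev_sum -map_rev /rsum map_map.
Qed.

Lemma pow_diff_upper a b r : 0 <= b <= a -> a ^ S r - b ^ S r <= INR (S r) * a ^ r * (a - b).
Proof.
  intros [hb hab]. induction r as [|r IH]; [simpl; lra|].
  have hbr : b ^ S r <= a ^ S r by (apply pow_incr; lra).
  have hbr0 : 0 <= b ^ S r by (apply pow_le; lra).
  replace (a ^ S (S r) - b ^ S (S r)) with (a * (a ^ S r - b ^ S r) + b ^ S r * (a - b))
    by (simpl; ring).
  replace (INR (S (S r)) * a ^ S r * (a - b)) with
    (a * (INR (S r) * a ^ r * (a - b)) + a ^ S r * (a - b)) by (rewrite [INR (S (S r))]S_INR; cbn [pow]; ring).
  apply Rplus_le_compat; [apply Rmult_le_compat_l|apply Rmult_le_compat_r]; lra.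
Qed.

Lemma pow_diff_lower a b r : 0 <= b <= a -> INR (S r) * b ^ r * (a - b) <= a ^ S r - b ^ S r.
Proof.
  intros [hb hab]. induction r as [|r IH]; [simpl; lra|].
  have hbr0 : 0 <= b ^ S r by (apply pow_le; lra).
  have h0 : 0 <= INR (S r) * b ^ r * (a - b).
  { apply Rmult_le_pos; [apply Rmult_le_pos; [apply pos_INR|apply pow_le; lra]|lra]. }
  replace (a ^ S (S r) - b ^ S (S r)) with (a * (a ^ S r - b ^ S r) + b ^ S r * (a - b))
    by (simpl; ring).
  replace (INR (S (S r)) * b ^ S r * (a - b)) with
    (b * (INR (S r) * b ^ r * (a - b)) + b ^ S r * (a - b)) by (rewrite [INR (S (S r))]S_INR; cbn [pow]; ring).
  apply Rplus_le_compat; [|lra].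
  apply Rle_trans with (a * (INR (S r) * b ^ r * (a - b))).
  - apply Rmult_le_compat_r; lra.
  - apply Rmult_le_compat_l; lra.
Qed.

Lemma ln_le_sub1 x : 0 < x -> ln x <= x - 1.
Proof. intros hx. have h := exp_ineq1_le (ln x). rewrite exp_ln in h; lra. Qed.

Lemma ln_ge0 x : 1 <= x -> 0 <= ln x.
Proof. intros h. rewrite -ln_1. apply Rcomplements.ln_le; lra. Qed.

Lemma ln_succ_upper m : 0 < m -> ln (m + 1) - ln m <= / m.
Proof.
  intros hm. rewrite -Rcomplements.ln_div; [|lra|lra].
  apply: Rle_trans; [apply ln_le_sub1; apply Rdiv_lt_0_compat; lra|].
  right. field. lra.
Qed.

Lemma ln_succ_lower m : 0 < m -> / (m + 1) <= ln (m + 1) - ln m.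
Proof.
  intros hm. have h : ln (m / (m + 1)) <= m / (m + 1) - 1.
  { apply ln_le_sub1; apply Rdiv_lt_0_compat; lra. }
  rewrite Rcomplements.ln_div in h; [|lra|lra].
  replace (m / (m + 1) - 1) with (- / (m + 1)) in h by (field; lra). lra.
Qed.

Lemma ln_pow_mono x y p : 1 <= x <= y -> 0 <= ln x ^ p <= ln y ^ p.
Proof.
  intros hxy. have h0 : 0 <= ln x by (apply ln_ge0; lra).
  split; [exact: pow_le|]. apply pow_incr. split; [exact h0|].
  apply Rcomplements.ln_le; lra.
Qed.
(* One-step comparisons of (ln m)^p / m with increments of primitives of it,
   used to compare sum_m (ln m)^p / m with (ln n)^(p+1) / (p+1). *)
Lemma log_pow_step_lower (m : R) p : 1 <= m ->
  (ln (m + 1) ^ S p - INR (S p) * ln (m + 1) ^ p) - (ln m ^ S p - INR (S p) * ln m ^ p)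
  <= INR (S p) * (ln m ^ p / m).
Proof.
  intros hm. set x := ln m. set y := ln (m + 1).
  have hx : 0 <= x by apply ln_ge0.
  have hxy : x <= y by (apply Rcomplements.ln_le; lra).
  have hyx : y - x <= / m by (apply ln_succ_upper; lra).
  have hd := pow_diff_upper y x p (conj hx hxy).
  have [hx0 hpp] : 0 <= x ^ p <= y ^ p by (split; [apply pow_le|apply pow_incr]; lra).
  have hi : 0 < / m <= 1.
  { split; [apply Rinv_0_lt_compat; lra|]. rewrite -Rinv_1. apply Rinv_le_contravar; lra. }
  have hp : 1 <= INR (S p) by (apply INR_ge1; lia).
  have e1 : INR (S p) * y ^ p * (y - x) <= INR (S p) * y ^ p * / m.
  { apply Rmult_le_compat_l; [nra|lra]. }
  have e2 : INR (S p) * (y ^ p - x ^ p) * / m <= INR (S p) * (y ^ p - x ^ p).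
  { have : 0 <= INR (S p) * (y ^ p - x ^ p) by nra. nra. }
  unfold Rdiv. nra.
Qed.

Lemma log_pow_step_upper (m Lp : R) p : 1 <= m -> ln m ^ p <= Lp ->
  INR (S p) * (ln m ^ p / m)
  <= (ln (m + 1) ^ S p - INR (S p) * Lp / (m + 1)) - (ln m ^ S p - INR (S p) * Lp / m).
Proof.
  intros hm hLp. set x := ln m. set y := ln (m + 1).
  have hx : 0 <= x by apply ln_ge0.
  have hxy : x <= y by (apply Rcomplements.ln_le; lra).
  have hyx : / (m + 1) <= y - x by (apply ln_succ_lower; lra).
  have hd := pow_diff_lower y x p (conj hx hxy).
  have hx0 : 0 <= x ^ p by exact: pow_le.
  have hi : / (m + 1) <= / m by (apply Rinv_le_contravar; lra).
  have hi0 : 0 < / (m + 1) by (apply Rinv_0_lt_compat; lra).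
  have hp : 0 <= INR (S p) by apply pos_INR.
  have e1 : INR (S p) * x ^ p * / (m + 1) <= INR (S p) * x ^ p * (y - x).
  { apply Rmult_le_compat_l; [nra|lra]. }
  have e2 : INR (S p) * x ^ p * (/ m - / (m + 1)) <= INR (S p) * Lp * (/ m - / (m + 1)).
  { apply Rmult_le_compat_r; [lra|]. exact: Rmult_le_compat_l. }
  unfold Rdiv. lra.
Qed.

(* (ln m)^(r+1) / (N - m) falls short of (ln N)^(r+1) / (N - m) by at most
   (r+1) (ln N)^r / m, since ln N - ln m <= (N - m)/m. *)
Lemma log_pow_reflected_term (m N : R) r : 1 <= m < N ->
  ln N ^ S r / (N - m) - INR (S r) * ln N ^ r / m <= ln m ^ S r / (N - m).
Proof.
  intros hmN. have hx : 0 <= ln m by (apply ln_ge0; lra).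
  have hxN : ln m <= ln N by (apply Rcomplements.ln_le; lra).
  have hlog : ln N - ln m <= (N - m) / m.
  { rewrite -Rcomplements.ln_div; [|lra|lra].
    apply: Rle_trans; [apply ln_le_sub1; apply Rdiv_lt_0_compat; lra|].
    right; field; lra. }
  have hdef : ln N ^ S r - ln m ^ S r <= INR (S r) * ln N ^ r * ((N - m) / m).
  { apply: Rle_trans; [exact: pow_diff_upper|].
    apply Rmult_le_compat_l; [|exact hlog].
    apply Rmult_le_pos; [apply pos_INR|apply pow_le; lra]. }
  apply (Rmult_le_reg_r (N - m)); [lra|].
  rewrite Rmult_minus_distr_r.
  rewrite (_ : ln N ^ S r / (N - m) * (N - m) = ln N ^ S r); [|field; lra].
  rewrite (_ : ln m ^ S r / (N - m) * (N - m) = ln m ^ S r); [|field; lra].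
  rewrite (_ : INR (S r) * ln N ^ r / m * (N - m) = INR (S r) * ln N ^ r * ((N - m) / m));
    [lra|field; lra].
Qed.

(* The weight w(m) = (ln m)^p / (m (n - m)) appearing in the convolution
   Z_(p+1)(m) Z_1(n - m). *)
Definition conv_weight (n p m : nat) : R := ln (INR m) ^ p / (INR m * (INR n - INR m)).

Section LogarithmicSums.
Variables (n p : nat).
Hypothesis hn : (2 <= n)%nat.
Let L := ln (INR n).

Lemma n_ge2 : 2 <= INR n.
Proof. exact: (INR_leq 2 n). Qed.

Lemma L_ge_half : / 2 <= L.
Proof.
  apply: Rle_trans; [exact: Rlt_le ln_lt_2|].
  apply Rcomplements.ln_le; [lra|exact n_ge2].
Qed.

Lemma Lp_ge0 : 0 <= L ^ p.
Proof. apply pow_le. have := L_ge_half. lra. Qed.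

Lemma lnpow_le_L m : (1 <= m)%nat -> (m <= n)%nat -> 0 <= ln (INR m) ^ p <= L ^ p.
Proof. intros h1 h2. apply ln_pow_mono. split; [exact: INR_ge1|exact: INR_leq]. Qed.

Lemma dist_ge1 m : (m <= n - 1)%nat -> 1 <= INR n - INR m.
Proof.
  intros h. have h' : (m + 1 <= n)%nat by lia. apply INR_leq in h'.
  rewrite plus_INR /= in h'. lra.
Qed.

Lemma harmonic_lower : L <= rsum (List.seq 1 (n - 1)) (fun m => / INR m).
Proof.
  have H := telescope_ge 1 (n - 1) (fun m => / INR m) (fun m => ln (INR m)).
  rewrite (_ : (1 + (n - 1))%nat = n) in H; [|lia]. change (INR 1) with 1 in H. rewrite ln_1 in H.
  rewrite /L. apply: Rle_trans; [|apply H]; [lra|].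
  intros m hm. apply in_seq_bounds in hm. have hm1 := INR_ge1 m (proj1 hm).
  cbv beta. rewrite (S_INR m). apply ln_succ_upper. lra.
Qed.

Lemma harmonic_upper : rsum (List.seq 1 (n - 1)) (fun m => / INR m) <= 1 + L.
Proof.
  rewrite (_ : (n - 1)%nat = S (n - 2)); [|lia]. rewrite /= rsum_cons Rinv_1.
  have H := telescope_le 2 (n - 2) (fun m => / INR m) (fun m => ln (INR m - 1)).
  rewrite (_ : (2 + (n - 2))%nat = n) in H; [|lia].
  rewrite (_ : INR 2 - 1 = 1) in H; [|simpl; lra]. rewrite ln_1 in H.
  have hl : ln (INR n - 1) <= L by (apply Rcomplements.ln_le; have := n_ge2; lra).
  enough (rsum (List.seq 2 (n - 2)) (fun m => / INR m) <= L) by lra.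
  apply: Rle_trans; [apply H|lra].
  intros m hm. apply in_seq_bounds in hm.
  have hx : 2 <= INR m by (change 2 with (INR 2); apply INR_leq; lia).
  cbv beta. rewrite (S_INR m) (_ : INR m + 1 - 1 = INR m); [|ring].
  have := ln_succ_lower (INR m - 1) ltac:(lra). rewrite (_ : INR m - 1 + 1 = INR m); lra.
Qed.

Lemma reflected_harmonic :
  rsum (List.seq 1 (n - 1)) (fun m => / (INR n - INR m)) =
  rsum (List.seq 1 (n - 1)) (fun m => / INR m).
Proof.
  rewrite -[in RHS]rsum_reflect. apply rsum_ext_in => m hm. apply in_seq_bounds in hm.
  rewrite (_ : (n - 1 + 1 - m)%nat = (n - m)%nat); [|lia].
  rewrite minus_INR //; lia.
Qed.

Lemma log_harmonic_estimate :
  Rabs (INR (S p) * rsum (List.seq 1 (n - 1)) (fun m => ln (INR m) ^ p / INR m) - L ^ S p)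
  <= INR (S p) * L ^ p.
Proof.
  rewrite -rsum_scale. have hLp := Lp_ge0. have hn2 := n_ge2.
  have hp : 1 <= INR (S p) by (apply INR_ge1; lia).
  have h0 : 0 <= 0 ^ p by (destruct p; simpl; lra).
  have e : (1 + (n - 1))%nat = n by lia.
  apply Rabs_le; split.
  - have H := telescope_ge 1 (n - 1) (fun m => INR (S p) * (ln (INR m) ^ p / INR m))
      (fun m => ln (INR m) ^ S p - INR (S p) * ln (INR m) ^ p).
    rewrite e in H. change (INR 1) with 1 in H. rewrite ln_1 in H. fold L in H.
    enough (L ^ S p - INR (S p) * L ^ p <= rsum (List.seq 1 (n - 1))
      (fun m => INR (S p) * (ln (INR m) ^ p / INR m))) by nra.
    apply: Rle_trans; [|apply H]; [rewrite pow_i; [nra|lia]|].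
    intros m hm. apply in_seq_bounds in hm. cbv beta. rewrite (S_INR m).
    exact: log_pow_step_lower (INR_ge1 m (proj1 hm)).
  - have H := telescope_le 1 (n - 1) (fun m => INR (S p) * (ln (INR m) ^ p / INR m))
      (fun m => ln (INR m) ^ S p - INR (S p) * L ^ p / INR m).
    rewrite e in H. change (INR 1) with 1 in H. rewrite ln_1 in H. fold L in H.
    enough (rsum (List.seq 1 (n - 1)) (fun m => INR (S p) * (ln (INR m) ^ p / INR m))
            <= L ^ S p + INR (S p) * L ^ p) by lra.
    apply: Rle_trans; [apply H|].
    + intros m hm. apply in_seq_bounds in hm. cbv beta. rewrite (S_INR m).
      apply: log_pow_step_upper; [exact: INR_ge1 m (proj1 hm)|].
      apply lnpow_le_L; lia.
    + have : 0 <= INR (S p) * L ^ p / INR n.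
      { apply Rmult_le_pos; [nra|apply Rlt_le, Rinv_0_lt_compat; lra]. }
      rewrite Rdiv_1_r pow_i; [lra|lia].
Qed.

(* (ln n)^(p+1) - 3p (ln n)^p <= sum_(m < n) (ln m)^p / (n - m) <= (ln n)^(p+1) + (ln n)^p:
   compare (ln m)^p with (ln n)^p and use the reflected harmonic sum. *)
Lemma reflected_log_upper :
  rsum (List.seq 1 (n - 1)) (fun m => ln (INR m) ^ p / (INR n - INR m)) <= L ^ S p + L ^ p.
Proof.
  have hLp := Lp_ge0. have hl := harmonic_lower. have hu := harmonic_upper.
  apply: Rle_trans (_ : rsum (List.seq 1 (n - 1)) (fun m => L ^ p * / (INR n - INR m)) <= _).
  - apply rsum_le_in => m hm. apply in_seq_bounds in hm.
    have hD : 1 <= INR n - INR m by (apply dist_ge1; lia).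
    have hb := lnpow_le_L m ltac:(lia) ltac:(lia).
    have hiD : 0 < / (INR n - INR m) by (apply Rinv_0_lt_compat; lra).
    apply Rmult_le_compat_r; lra.
  - rewrite rsum_scale reflected_harmonic (_ : L ^ S p = L ^ p * L); [|simpl; ring].
    have : L ^ p * rsum (List.seq 1 (n - 1)) (fun m => / INR m) <= L ^ p * (1 + L).
    { apply Rmult_le_compat_l; lra. }
    lra.
Qed.

Lemma reflected_log_lower :
  L ^ S p - 3 * INR p * L ^ p
  <= rsum (List.seq 1 (n - 1)) (fun m => ln (INR m) ^ p / (INR n - INR m)).
Proof.
  have hL := L_ge_half. have hl := harmonic_lower. have hu := harmonic_upper.
  have er := reflected_harmonic.
  destruct p as [|r].
  - rewrite (rsum_ext_in _ _ (fun m => / (INR n - INR m))); [simpl; lra|].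
    intros; unfold Rdiv; simpl; ring.
  - have hr : 0 <= L ^ r by (apply pow_le; lra).
    have hS : 0 <= INR (S r) by apply pos_INR.
    have HH : rsum (List.seq 1 (n - 1))
        (fun m => L ^ S r * / (INR n - INR m) - INR (S r) * L ^ r * / INR m)
      <= rsum (List.seq 1 (n - 1)) (fun m => ln (INR m) ^ S r / (INR n - INR m)).
    { apply rsum_le_in => m hm. apply in_seq_bounds in hm.
      have hm1 := INR_ge1 m (proj1 hm). have hD : 1 <= INR n - INR m by (apply dist_ge1; lia).
      apply: log_pow_reflected_term; lra. }
    rewrite rsum_sub !rsum_scale er in HH.
    have hp3 : INR (S r) * L ^ r * rsum (List.seq 1 (n - 1)) (fun m => / INR m)
               <= INR (S r) * L ^ r * (1 + L) by (apply Rmult_le_compat_l; nra).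
    have hp4 : L ^ S r * L <= L ^ S r * rsum (List.seq 1 (n - 1)) (fun m => / INR m).
    { apply Rmult_le_compat_l; [simpl; nra|lra]. }
    have hrr : INR (S r) * L ^ r * (1 + L) <= 3 * INR (S r) * L ^ S r.
    { have : INR (S r) * L ^ r <= INR (S r) * (2 * L ^ S r).
      { apply Rmult_le_compat_l; [lra|simpl; nra]. }
      have : INR (S r) * L ^ r * L = INR (S r) * L ^ S r by (simpl; ring). nra. }
    rewrite (_ : L ^ S (S r) = L ^ S r * L); [lra|simpl; ring].
Qed.

(* Partial fractions: n w(m) = (ln m)^p / m + (ln m)^p / (n - m), so
   (p+1) sum_m w(m) = (p+2) (ln n)^(p+1) / n + O(p^2 (ln n)^p / n). *)
Lemma weight_sum_estimate :
  Rabs (INR (S p) * rsum (List.seq 1 (n - 1)) (conv_weight n p)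
        - INR (S (S p)) * (L ^ S p / INR n))
  <= 4 * INR (S (S p)) ^ 2 * (L ^ p / INR n).
Proof.
  set T1 := rsum (List.seq 1 (n - 1)) (fun m => ln (INR m) ^ p / INR m).
  set T2 := rsum (List.seq 1 (n - 1)) (fun m => ln (INR m) ^ p / (INR n - INR m)).
  have hn2 := n_ge2. have hLp := Lp_ge0.
  have split_sum : rsum (List.seq 1 (n - 1)) (conv_weight n p) = / INR n * (T1 + T2).
  { rewrite -rsum_add -rsum_scale. apply rsum_ext_in => m hm. apply in_seq_bounds in hm.
    have hm1 := INR_ge1 m (proj1 hm). have hD : 1 <= INR n - INR m by (apply dist_ge1; lia).
    rewrite /conv_weight. field. lra. }
  have hT1 := log_harmonic_estimate. rewrite -/T1 in hT1.
  have hT2l := reflected_log_lower. have hT2u := reflected_log_upper.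
  rewrite -/T2 in hT2l hT2u.
  have hp0 : 0 <= INR p by apply pos_INR.
  have key : Rabs ((INR (S p) * T1 - L ^ S p) + INR (S p) * (T2 - L ^ S p))
             <= 4 * INR (S (S p)) ^ 2 * L ^ p.
  { apply: Rle_trans; [apply Rabs_triang|].
    rewrite Rabs_mult (Rabs_pos_eq (INR (S p))); [|apply pos_INR].
    have h2 : Rabs (T2 - L ^ S p) <= (1 + 3 * INR p) * L ^ p by (apply Rabs_le; nra).
    have h3 : INR (S p) * Rabs (T2 - L ^ S p) <= INR (S p) * ((1 + 3 * INR p) * L ^ p).
    { apply Rmult_le_compat_l; [apply pos_INR|exact h2]. }
    rewrite !S_INR in hT1 h3 |- *. nra. }
  rewrite split_sum.
  rewrite (_ : INR (S p) * (/ INR n * (T1 + T2)) - INR (S (S p)) * (L ^ S p / INR n) =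
    / INR n * ((INR (S p) * T1 - L ^ S p) + INR (S p) * (T2 - L ^ S p)));
    [|rewrite [INR (S (S p))]S_INR; field; lra].
  have hin : 0 < / INR n by (apply Rinv_0_lt_compat; lra).
  rewrite Rabs_mult (Rabs_pos_eq (/ INR n)); [|lra].
  unfold Rdiv. rewrite (Rmult_comm (/ INR n)) -Rmult_assoc.
  apply Rmult_le_compat_r; lra.
Qed.

Lemma inv_dist_product m : (1 <= m)%nat -> (m <= n - 1)%nat ->
  0 < / (INR m * (INR n - INR m)) <= 2 / INR n.
Proof.
  intros h1 h2. have hm := INR_ge1 m h1. have hD := dist_ge1 m h2. have hn2 := n_ge2.
  have hpos : 0 < INR m * (INR n - INR m) by nra.
  split; [apply Rinv_0_lt_compat; lra|].
  have hge : INR n / 2 <= INR m * (INR n - INR m) by nra.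
  unfold Rdiv. rewrite -(Rinv_inv 2) -Rinv_mult. apply Rinv_le_contravar; lra.
Qed.

Lemma weight_bound m : (1 <= m)%nat -> (m <= n - 1)%nat ->
  0 <= conv_weight n p m <= 2 * L ^ p / INR n.
Proof.
  intros h1 h2. have hw := inv_dist_product m h1 h2.
  have hb := lnpow_le_L m h1 ltac:(lia).
  rewrite /conv_weight. unfold Rdiv in *. split; [nra|].
  rewrite (_ : 2 * L ^ p * / INR n = L ^ p * (2 * / INR n)); [|ring].
  apply Rmult_le_compat; lra.
Qed.

(* One step of the total variation of w: the numerator (ln m)^p increases,
   and 1/(m(n-m)) = (1/m + 1/(n-m))/n changes by two telescoping differences. *)
Lemma weight_step_variation m : (1 <= m)%nat -> (m <= n - 2)%nat ->
  Rabs (conv_weight n p (S m) - conv_weight n p m)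
  <= 2 / INR n * (ln (INR m + 1) ^ p - ln (INR m) ^ p)
     + L ^ p / INR n * ((/ INR m - / (INR m + 1)) + (/ (INR n - (INR m + 1)) - / (INR n - INR m))).
Proof.
  intros h1 h2. have hm1 := INR_ge1 m h1. have hn2 := n_ge2.
  have hD : 1 <= INR n - INR (S m) by (apply dist_ge1; lia).
  have hw2 := inv_dist_product (S m) ltac:(lia) ltac:(lia).
  have hb1 := lnpow_le_L m h1 ltac:(lia).
  rewrite /conv_weight /Rdiv. rewrite (S_INR m) in hD hw2 |- *.
  set x := ln (INR m) ^ p in hb1 |- *. set y := ln (INR m + 1) ^ p.
  have hxy : x <= y by (apply ln_pow_mono; lra).
  set w1 := / (INR m * (INR n - INR m)). set w2 := / ((INR m + 1) * (INR n - (INR m + 1))) in hw2 *.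
  have ew1 : w1 = / INR n * (/ INR m + / (INR n - INR m)) by (rewrite /w1; field; lra).
  have ew2 : w2 = / INR n * (/ (INR m + 1) + / (INR n - (INR m + 1))) by (rewrite /w2; field; lra).
  have ha : / (INR m + 1) <= / INR m by (apply Rinv_le_contravar; lra).
  have hb : / (INR n - INR m) <= / (INR n - (INR m + 1)) by (apply Rinv_le_contravar; lra).
  have hin : 0 < / INR n by (apply Rinv_0_lt_compat; lra).
  have hB : Rabs (w2 - w1) <= / INR n *
      ((/ INR m - / (INR m + 1)) + (/ (INR n - (INR m + 1)) - / (INR n - INR m))).
  { rewrite ew1 ew2. apply Rabs_le. split; nra. }
  rewrite (_ : y * w2 - x * w1 = (y - x) * w2 + x * (w2 - w1)); [|ring].
  apply: Rle_trans; [apply Rabs_triang|].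
  rewrite !Rabs_mult (Rabs_pos_eq (y - x)); [|lra].
  rewrite (Rabs_pos_eq x (proj1 hb1)) (Rabs_pos_eq w2); [|unfold Rdiv in hw2; lra].
  have e1 : (y - x) * w2 <= (y - x) * (2 * / INR n).
  { apply Rmult_le_compat_l; [lra|]. unfold Rdiv in hw2. lra. }
  have e2 : x * Rabs (w2 - w1) <= L ^ p * (/ INR n *
      ((/ INR m - / (INR m + 1)) + (/ (INR n - (INR m + 1)) - / (INR n - INR m)))).
  { apply Rmult_le_compat; try lra. apply Rabs_pos. }
  lra.
Qed.

Lemma weight_variation :
  rsum (List.seq 1 (n - 2)) (fun m => Rabs (conv_weight n p (S m) - conv_weight n p m))
  <= 4 * L ^ p / INR n.
Proof.
  have hn2 := n_ge2. have hLp := Lp_ge0.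
  have H := telescope_le 1 (n - 2) (fun m => Rabs (conv_weight n p (S m) - conv_weight n p m))
     (fun m => 2 / INR n * ln (INR m) ^ p + L ^ p / INR n * (/ (INR n - INR m) - / INR m)).
  rewrite (_ : (1 + (n - 2))%nat = (n - 1)%nat) in H; [|lia].
  change (INR 1) with 1 in H. rewrite ln_1 in H.
  apply: Rle_trans; [apply H|].
  { intros m hm. apply in_seq_bounds in hm. cbv beta. rewrite (S_INR m).
    apply: Rle_trans; [apply weight_step_variation; lia|]. right. field.
    have hm1 := INR_ge1 m (proj1 hm). have hD := dist_ge1 (S m) ltac:(lia).
    rewrite (S_INR m) in hD. lra. }
  have en1 : INR (n - 1) = INR n - 1 by (rewrite minus_INR; [reflexivity|lia]).
  rewrite en1 (_ : INR n - (INR n - 1) = 1); [|ring]. rewrite Rinv_1.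
  have hb := lnpow_le_L (n - 1) ltac:(lia) ltac:(lia). rewrite en1 in hb.
  have h0 : 0 <= 0 ^ p by (destruct p; simpl; lra).
  have hi : 0 <= / (INR n - 1) by (apply Rlt_le, Rinv_0_lt_compat; lra).
  have hin : 0 < / INR n by (apply Rinv_0_lt_compat; lra).
  have a1 : 2 * / INR n * ln (INR n - 1) ^ p <= 2 * / INR n * L ^ p.
  { apply Rmult_le_compat_l; [lra|exact (proj2 hb)]. }
  have a2 : 0 <= L ^ p * / INR n * / (INR n - 1) by (apply Rmult_le_pos; nra).
  have a3 : 0 <= 2 * / INR n * 0 ^ p by nra.
  unfold Rdiv. lra.
Qed.
End LogarithmicSums.

(* Lower bound sin u >= 2u/5 on (0, pi/2], from the Taylor lower bound
   [sin_lb] of the standard library. *)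
Lemma sin_lb_lower a : 0 <= a <= 1 -> a - a * a * a / 6 - a / 5040 <= sin_lb a.
Proof.
  intros h. unfold sin_lb, sin_approx. simpl sum_f_R0. unfold sin_term.
  replace (INR (Factorial.fact (2 * 0 + 1))) with 1 by (simpl; ring).
  replace (INR (Factorial.fact (2 * 1 + 1))) with 6 by (simpl; ring).
  replace (INR (Factorial.fact (2 * 2 + 1))) with 120 by (simpl; ring).
  replace (INR (Factorial.fact (2 * 3 + 1))) with 5040 by (simpl; ring).
  simpl.
  have h5 : 0 <= a * (a * (a * (a * (a * 1)))) by (have := pow_le a 5; simpl; intros; nra).
  have h7 : a * (a * (a * (a * (a * (a * (a * 1)))))) <= a.
  { have := pow_incr a 1 6. have := pow_le a 6. simpl. nra. }
  lra.
Qed.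

Lemma sin_lower u : 0 < u <= PI / 2 -> 2 * u / 5 <= sin u.
Proof.
  intros [h1 h2]. have hp := PI_4.
  destruct (Rle_lt_dec u 1) as [hu|hu].
  - have := sin_lb_lower u (conj (Rlt_le _ _ h1) hu).
    have := SIN u ltac:(lra) ltac:(lra). nra.
  - have h := sin_incr_1 1 u ltac:(lra) ltac:(lra) ltac:(lra) ltac:(lra) ltac:(lra).
    have := sin_lb_lower 1 ltac:(lra). have := SIN 1 ltac:(lra) ltac:(have := PI2_1; lra).
    lra.
Qed.

Lemma Cpow_polar r g m :
  Cpow (r * cos g, r * sin g) m = (r ^ m * cos (INR m * g), r ^ m * sin (INR m * g)).
Proof.
  induction m as [|m IH].
  - rewrite /= Rmult_0_l cos_0 sin_0. unfold C1. apply injective_projections; simpl; ring.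
  - rewrite [Cpow _ _.+1]/= IH S_INR (_ : (INR m + 1) * g = g + INR m * g); [|ring].
    rewrite cos_plus sin_plus. unfold Cmul; apply injective_projections; simpl; ring.
Qed.

Lemma Cnorm_polar r g : Cnorm (r * cos g, r * sin g) = Rabs r.
Proof.
  rewrite /Cnorm /=.
  replace (r * cos g * (r * cos g) + r * sin g * (r * sin g)) with
    (Rsqr r * ((sin g)² + (cos g)²)) by (unfold Rsqr; ring).
  rewrite sin2_cos2 Rmult_1_r. apply sqrt_Rsqr_abs.
Qed.

Lemma Cnorm_unit_pow z m : Cnorm z = 1 -> Cnorm (Cpow z m) = 1.
Proof.
  intros h. induction m as [|m IH]; simpl.
  - rewrite /C1 /Cnorm /= (_ : 1 * 1 + 0 * 0 = 1); [apply sqrt_1|ring].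
  - rewrite Cnorm_mul h IH. ring.
Qed.

Lemma abel_summation (z : Cx) (h : nat -> R) (N : nat) :
  Cmul (Csub C1 z) (csum (List.seq 1 (S N)) (fun m => Cscale (h m) (Cpow z m))) =
  Cadd (Csub (Cscale (h 1%nat) z) (Cscale (h (S N)) (Cpow z (S (S N)))))
       (csum (List.seq 1 N) (fun m => Cscale (h (S m) - h m) (Cpow z (S m)))).
Proof.
  induction N as [|N IH].
  - rewrite /csum /=. cx_ring.
  - rewrite seq_S csum_app csum_cons {2}(seq_S N) csum_app csum_cons.
    change (Nat.add 1 (S N)) with (S (S N)). change (Nat.add 1 N) with (S N).
    change (Cpow z (S (S (S N)))) with (Cmul z (Cpow z (S (S N)))).
    move: IH. set S0 := csum (List.seq 1 (S N)) _. set S1 := csum (List.seq 1 N) _.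
    set P := Cpow z (S (S N)). move=> IH.
    rewrite (_ : Cmul (Csub C1 z) (Cadd S0 (Cadd (Cscale (h (S (S N))) P) (csum nil (fun m => Cscale (h m) (Cpow z m))))) =
      Cadd (Cmul (Csub C1 z) S0) (Cmul (Csub C1 z) (Cscale (h (S (S N))) P))); [|cx_ring].
    rewrite IH. cx_ring.
Qed.

Lemma abel_summation_bound (z : Cx) (h : nat -> R) (N : nat) : Cnorm z = 1 ->
  Cnorm (Csub C1 z) * Cnorm (csum (List.seq 1 (S N)) (fun m => Cscale (h m) (Cpow z m)))
  <= Rabs (h 1%nat) + Rabs (h (S N)) + rsum (List.seq 1 N) (fun m => Rabs (h (S m) - h m)).
Proof.
  intros hz. rewrite -Cnorm_mul abel_summation.
  apply: Rle_trans; [apply Cnorm_add|]. apply Rplus_le_compat.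
  - apply: Rle_trans; [apply Cnorm_sub|].
    rewrite !Cnorm_scale hz Cnorm_unit_pow; [lra|exact hz].
  - apply: Rle_trans; [apply Cnorm_csum|]. right. apply rsum_ext_in => m _.
    rewrite Cnorm_scale Cnorm_unit_pow; [ring|exact hz].
Qed.

Lemma Cnorm_one_sub_unit t : Cnorm (Csub C1 (cos t, sin t)) = 2 * Rabs (sin (t / 2)).
Proof.
  rewrite /Csub /Cadd /Copp /C1 /Cnorm /=.
  replace ((1 + - cos t) * (1 + - cos t) + (0 + - sin t) * (0 + - sin t)) with
    (2 - 2 * cos t + ((sin t)² + (cos t)² - 1)) by (unfold Rsqr; ring).
  rewrite sin2_cos2.
  replace t with (2 * (t / 2)) at 1 by field. rewrite cos_2a_sin.
  replace (2 - 2 * (1 - 2 * sin (t / 2) * sin (t / 2)) + (1 - 1)) with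
    (Rsqr (2 * sin (t / 2))) by (unfold Rsqr; ring).
  rewrite sqrt_Rsqr_abs Rabs_mult Rabs_right; lra.
Qed.

Lemma unit_gap gi gj g : - PI < gi < PI -> - PI < gj < PI -> 0 < g ->
  g <= Rabs (gi - gj) -> g <= Rabs (PI - gi) -> g <= Rabs (PI - gj) ->
  2 * g / 5 <= Cnorm (Csub C1 (cos (gi - gj), sin (gi - gj))).
Proof.
  intros hi hj hg h1 h2 h3. rewrite Cnorm_one_sub_unit.
  have half_angle : forall t, 0 < t < PI -> g <= 2 * t -> g <= 2 * (PI - t) -> g / 5 <= sin t.
  { intros t ht ha hb. destruct (Rle_lt_dec t (PI / 2)) as [hl|hl].
    - have := sin_lower t (conj (proj1 ht) hl). lra.
    - have := sin_lower (PI - t) ltac:(lra). rewrite sin_PI_x. lra. }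
  rewrite Rabs_pos_eq in h2; [|lra]. rewrite Rabs_pos_eq in h3; [|lra].
  destruct (Rle_lt_dec 0 (gi - gj)) as [hp|hn].
  - rewrite Rabs_pos_eq in h1; [|lra].
    have ht : 0 < (gi - gj) / 2 < PI by lra.
    have hs := half_angle ((gi - gj) / 2) ht ltac:(lra) ltac:(lra).
    have hs0 := sin_gt_0 _ (proj1 ht) (proj2 ht). rewrite Rabs_pos_eq; lra.
  - rewrite Rabs_left in h1; [|lra].
    have ht : 0 < - (gi - gj) / 2 < PI by lra.
    have hs := half_angle (- (gi - gj) / 2) ht ltac:(lra) ltac:(lra).
    have hs0 := sin_gt_0 _ (proj1 ht) (proj2 ht).
    rewrite (_ : (gi - gj) / 2 = - (- (gi - gj) / 2)); [|field].
    rewrite sin_neg Rabs_Ropp Rabs_pos_eq; lra.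
Qed.

Lemma Cpow_add z n1 n2 : Cmul (Cpow z n1) (Cpow z n2) = Cpow z (n1 + n2).
Proof. induction n1 as [|n1 IH]; [rewrite add0n; cx_ring|]. rewrite addSn /= -IH. cx_ring. Qed.

Lemma Cpow_mul z w m : Cpow (Cmul z w) m = Cmul (Cpow z m) (Cpow w m).
Proof. induction m as [|m IH]; [cx_ring|]. rewrite /= IH. cx_ring. Qed.

Lemma alpha_of_rotate q ga gb :
  alpha_of q ga = Cmul (alpha_of q gb) (cos (ga - gb), sin (ga - gb)).
Proof.
  have h := sin2_cos2 gb. rewrite /Rsqr in h.
  rewrite /alpha_of /Cmul cos_minus sin_minus. apply injective_projections; simpl.
  - transitivity (sqrt q * cos ga * (sin gb * sin gb + cos gb * cos gb)); [rewrite h|]; ring.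
  - transitivity (sqrt q * sin ga * (sin gb * sin gb + cos gb * cos gb)); [rewrite h|]; ring.
Qed.

Lemma Cnorm_alpha_pow q g m : 0 <= q -> Cnorm (Cpow (alpha_of q g) m) = sqrt q ^ m.
Proof.
  intros hq. rewrite /alpha_of Cpow_polar Cnorm_polar Rabs_pos_eq //.
  apply pow_le. apply sqrt_pos.
Qed.

Lemma fold_min_le v vs x : In x (v :: vs) -> fold_right Rmin v vs <= x.
Proof.
  revert x. induction vs as [|w vs IH]; intros x hx.
  - destruct hx as [<-|[]]. simpl; lra.
  - simpl. destruct hx as [<-|[<-|hx]].
    + apply: Rle_trans; [apply Rmin_r|]. apply IH. now left.
    + apply Rmin_l.
    + apply: Rle_trans; [apply Rmin_r|]. apply IH. now right.
Qed.

Lemma fold_min_pos v vs : (forall x, In x (v :: vs) -> 0 < x) -> 0 < fold_right Rmin v vs.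
Proof.
  induction vs as [|w vs IH]; intros h.
  - simpl. apply h. now left.
  - simpl. apply Rmin_glb_lt.
    + apply h. right; now left.
    + apply IH. intros x [<-|hx]; apply h; [now left|right; now right].
Qed.

Section Gamma.
Variable zs : list (R * nat).
Hypothesis hz : forall a, In a zs -> - PI < fst a < PI /\ fst a <> 0.

Lemma gamma_min_le x : In x (gamma_vals (map fst zs)) -> gamma_min zs <= x.
Proof.
  rewrite /gamma_min. destruct (gamma_vals (map fst zs)) as [|v vs]; [intros []|].
  exact: fold_min_le.
Qed.

Lemma gamma_min_pos : 0 < gamma_min zs.
Proof.
  have vals_pos : forall x, In x (gamma_vals (map fst zs)) -> 0 < x.
  { intros x h. apply in_flat_map in h. destruct h as [g [hg hx]].
    apply in_map_iff in hg. destruct hg as [a [<- ha]].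
    destruct (hz a ha) as [[h1 h2] h3].
    destruct hx as [<-|[<-|hx]]; [apply Rabs_pos_lt; exact h3|apply Rabs_pos_lt; lra|].
    apply in_flat_map in hx. destruct hx as [y [_ hx]].
    destruct (Req_dec_T (fst a) y) as [e|ne]; simpl in hx; [destruct hx|].
    destruct hx as [<-|[]]. apply Rabs_pos_lt. lra. }
  rewrite /gamma_min. destruct (gamma_vals (map fst zs)) as [|v vs] eqn:E.
  - exact PI_RGT_0.
  - exact: fold_min_pos.
Qed.

Lemma gamma_min_le_pi a : In a zs -> gamma_min zs <= Rabs (PI - fst a).
Proof.
  intros ha. apply gamma_min_le. apply in_flat_map.
  exists (fst a). split; [apply in_map; exact ha|right; now left].
Qed.

Lemma gamma_min_le_diff a b : In a zs -> In b zs -> fst a <> fst b ->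
  gamma_min zs <= Rabs (fst a - fst b).
Proof.
  intros ha hb hne. apply gamma_min_le. apply in_flat_map.
  exists (fst a). split; [apply in_map; exact ha|right; right].
  apply in_flat_map. exists (fst b). split; [apply in_map; exact hb|].
  destruct (Req_dec_T (fst a) (fst b)) as [e|ne]; [contradiction|simpl; now left].
Qed.

Lemma zero_ratio_gap a b : In a zs -> In b zs -> fst a <> fst b ->
  2 * gamma_min zs / 5 <= Cnorm (Csub C1 (cos (fst a - fst b), sin (fst a - fst b))).
Proof.
  intros ha hb hne. apply unit_gap.
  - exact (proj1 (hz a ha)).
  - exact (proj1 (hz b hb)).
  - exact gamma_min_pos.
  - exact: gamma_min_le_diff.
  - exact: gamma_min_le_pi.
  - exact: gamma_min_le_pi.
Qed.

Lemma alpha_of_inj q a b : 0 < q -> In a zs -> In b zs -> fst a <> fst b ->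
  alpha_of q (fst a) <> alpha_of q (fst b).
Proof.
  intros hq ha hb hne e. have hg := zero_ratio_gap a b ha hb hne.
  have hgp := gamma_min_pos.
  have e1 : Cmul (alpha_of q (fst b)) (Csub C1 (cos (fst a - fst b), sin (fst a - fst b))) = C0.
  { rewrite (_ : Cmul _ _ = Csub (alpha_of q (fst b)) (alpha_of q (fst a))); [|rewrite [alpha_of q (fst a)](alpha_of_rotate q (fst a) (fst b)); cx_ring].
    rewrite e. cx_ring. }
  have := Cnorm_mul (alpha_of q (fst b)) (Csub C1 (cos (fst a - fst b), sin (fst a - fst b))).
  rewrite e1 Cnorm_C0 /alpha_of Cnorm_polar Rabs_pos_eq; [|apply sqrt_pos].
  have : 0 < sqrt q by apply sqrt_lt_R0. nra.
Qed.
End Gamma.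

(* The contribution of a pair (a, b) of zeros to the convolution:
   sum_(n1 = 1..n-1) m_a^(p+1) m_b w(n1) alpha_a^n1 alpha_b^(n-n1). *)
Definition pair_conv (q : R) (n p : nat) (a b : R * nat) : Cx :=
  csum (List.seq 1 (n - 1)) (fun n1 => Cscale (INR (snd a) ^ S p * INR (snd b) * conv_weight n p n1)
    (Cmul (Cpow (alpha_of q (fst a)) n1) (Cpow (alpha_of q (fst b)) (n - n1)))).

Lemma convolution_expansion q zs n p : (2 <= n)%nat ->
  fold_right Cadd C0 (map (fun n1 => Cmul (Zsum q zs (S p) n1) (Zsum q zs 1 (n - n1)))
    (List.seq 1 (n - 1)))
  = Cscale ((-1) ^ p / INR (fact p)) (csum zs (fun a => csum zs (pair_conv q n p a))).
Proof.
  intros hn. rewrite -/(csum _ _).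
  have scale_mul : forall c1 c2 X Y, Cmul (Cscale c1 X) (Cscale c2 Y) = Cscale (c1 * c2) (Cmul X Y).
  { intros; cx_ring. }
  rewrite (csum_ext_in _ _ (fun n1 => Cscale ((-1) ^ p / INR (fact p))
    (csum zs (fun a => csum zs (fun b => Cscale (INR (snd a) ^ S p * INR (snd b) * conv_weight n p n1)
       (Cmul (Cpow (alpha_of q (fst a)) n1) (Cpow (alpha_of q (fst b)) (n - n1)))))))).
  - rewrite csum_scale csum_swap. f_equal. apply csum_ext_in => a _. by rewrite csum_swap.
  - intros n1 hn1. apply in_seq_bounds in hn1.
    rewrite /Zsum -!/(csum _ _) scale_mul (_ : (S p - 1)%nat = p); [|lia].
    rewrite (_ : (-1) ^ S p / INR (fact p) * ((-1) ^ 1 / INR (fact (1 - 1))) =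
                 (-1) ^ p / INR (fact p)); [|simpl; field; exact: INR_fact_neq_0].
    f_equal. rewrite csum_mulr. apply csum_ext_in => a _.
    rewrite csum_mull. apply csum_ext_in => b _. rewrite scale_mul. f_equal.
    have hm := INR_ge1 n1 (proj1 hn1). have hD : 1 <= INR n - INR n1 by (apply dist_ge1; lia).
    rewrite /conv_weight minus_INR; [|lia]. simpl pow. field. lra.
Qed.

Lemma diagonal_pair_estimate q n p g m : 0 <= q -> (2 <= n)%nat ->
  Cnorm (Csub (Cscale (INR (S p)) (pair_conv q n p (g, m) (g, m)))
     (Cscale (INR (S (S p))) (Cscale (INR m ^ S (S p) * ln (INR n) ^ S p / INR n)
        (Cpow (alpha_of q g) n))))
  <= INR m ^ S (S p) * sqrt q ^ n * (4 * INR (S (S p)) ^ 2 * (ln (INR n) ^ p / INR n)).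
Proof.
  intros hq hn.
  have diag : pair_conv q n p (g, m) (g, m) = Cscale (INR m ^ S p * INR m *
      rsum (List.seq 1 (n - 1)) (conv_weight n p)) (Cpow (alpha_of q g) n).
  { rewrite /pair_conv -csum_scale_const. apply csum_ext_in => n1 hn1.
    apply in_seq_bounds in hn1. by rewrite /= Cpow_add (_ : (n1 + (n - n1))%nat = n); [|lia]. }
  have hm : 0 <= INR m ^ S (S p) by (apply pow_le; apply pos_INR).
  rewrite diag (_ : forall a b c d X, Csub (Cscale a (Cscale b X)) (Cscale c (Cscale d X)) =
    Cscale (a * b - c * d) X); [|intros; cx_ring].
  rewrite Cnorm_scale Cnorm_alpha_pow //.
  rewrite (_ : INR (S p) * (INR m ^ S p * INR m * rsum (List.seq 1 (n - 1)) (conv_weight n p)) -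
      INR (S (S p)) * (INR m ^ S (S p) * ln (INR n) ^ S p / INR n) =
    INR m ^ S (S p) * (INR (S p) * rsum (List.seq 1 (n - 1)) (conv_weight n p) -
      INR (S (S p)) * (ln (INR n) ^ S p / INR n))); [|simpl; field; have := n_ge2 n hn; lra].
  rewrite Rabs_mult Rabs_pos_eq //.
  set X := Rabs _. have hX : X <= 4 * INR (S (S p)) ^ 2 * (ln (INR n) ^ p / INR n).
  { exact: weight_sum_estimate. }
  have hs : 0 <= sqrt q ^ n by apply pow_le, sqrt_pos.
  rewrite (_ : INR m ^ S (S p) * X * sqrt q ^ n = INR m ^ S (S p) * sqrt q ^ n * X); [|ring].
  apply Rmult_le_compat_l; [exact: Rmult_le_pos|exact hX].
Qed.

Lemma oscillating_weight_sum n p z : (2 <= n)%nat -> Cnorm z = 1 ->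
  Cnorm (Csub C1 z) * Cnorm (csum (List.seq 1 (n - 1)) (fun n1 => Cscale (conv_weight n p n1) (Cpow z n1)))
  <= 8 * (ln (INR n) ^ p / INR n).
Proof.
  intros hn hz. rewrite (_ : (n - 1)%nat = S (n - 2)); [|lia].
  apply: Rle_trans; [exact: abel_summation_bound|].
  have h1 := weight_bound n p hn 1 ltac:(lia) ltac:(lia).
  have h2 := weight_bound n p hn (S (n - 2)) ltac:(lia) ltac:(lia).
  have h3 := weight_variation n p hn.
  rewrite (Rabs_pos_eq (conv_weight n p 1)); [|lra].
  rewrite (Rabs_pos_eq (conv_weight n p (S (n - 2)))); [|lra].
  unfold Rdiv in *. lra.
Qed.

(* An off-diagonal pair is O((ln n)^p / (n gamma)), using the gap |1 - z| >= 2 gamma / 5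
   for the ratio z = alpha_a / alpha_b. *)
Lemma offdiagonal_pair_bound q n p a b gam : 0 <= q -> (2 <= n)%nat -> 0 < gam ->
  2 * gam / 5 <= Cnorm (Csub C1 (cos (fst a - fst b), sin (fst a - fst b))) ->
  Cnorm (pair_conv q n p a b) <=
  INR (snd a) ^ S p * INR (snd b) * sqrt q ^ n * (20 * ln (INR n) ^ p / (INR n * gam)).
Proof.
  intros hq hn hg hz.
  set z := (cos (fst a - fst b), sin (fst a - fst b)) in hz.
  set c := INR (snd a) ^ S p * INR (snd b).
  set S := csum (List.seq 1 (n - 1)) (fun n1 => Cscale (conv_weight n p n1) (Cpow z n1)).
  have factor : pair_conv q n p a b = Cmul (Cpow (alpha_of q (fst b)) n) (Cscale c S).
  { rewrite /pair_conv /S -csum_scale csum_mull. apply csum_ext_in => n1 hn1.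
    apply in_seq_bounds in hn1.
    rewrite (alpha_of_rotate q (fst a) (fst b)) Cpow_mul -/z.
    have en : Cpow (alpha_of q (fst b)) n =
              Cmul (Cpow (alpha_of q (fst b)) n1) (Cpow (alpha_of q (fst b)) (n - n1)).
    { by rewrite Cpow_add (_ : (n1 + (n - n1))%nat = n); [|lia]. }
    rewrite en /c. cx_ring. }
  have hz1 : Cnorm z = 1.
  { rewrite /z -(Rmult_1_l (cos _)) -(Rmult_1_l (sin _)) Cnorm_polar. apply Rabs_R1. }
  have hn2 := n_ge2 n hn. have hLp := Lp_ge0 n p hn.
  have hS := oscillating_weight_sum n p z hn hz1. rewrite -/S in hS.
  have hSb : Cnorm S <= 20 * ln (INR n) ^ p / (INR n * gam).
  { apply (Rmult_le_reg_l (2 * gam / 5)); [lra|].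
    have : 2 * gam / 5 * Cnorm S <= Cnorm (Csub C1 z) * Cnorm S.
    { apply Rmult_le_compat_r; [apply Cnorm_ge0|lra]. }
    rewrite (_ : 2 * gam / 5 * (20 * ln (INR n) ^ p / (INR n * gam)) =
                 8 * (ln (INR n) ^ p / INR n)); [lra|field; lra]. }
  have hc : 0 <= c by (apply Rmult_le_pos; [apply pow_le|]; apply pos_INR).
  rewrite factor Cnorm_mul Cnorm_alpha_pow // Cnorm_scale Rabs_pos_eq //.
  have hs : 0 <= sqrt q ^ n by apply pow_le, sqrt_pos.
  apply: Rle_trans; [apply Rmult_le_compat_l; [exact hs|apply Rmult_le_compat_l; [exact hc|exact hSb]]|].
  right; ring.
Qed.

(* Complex numbers given as pairs
   are identified with the algebraic complex numbers R[i], so that L(u, chi)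
   becomes a polynomial in {poly R[i]} and the root theory of MathComp
   applies. *)
Section MultiplicityBound.
Import GRing.Theory Num.Theory.
Local Open Scope ring_scope.

Definition toC (a : Cx) : R[i] := Complex (fst a) (snd a).

Lemma toC_add a b : toC (Cadd a b) = toC a + toC b. Proof. by []. Qed.
Lemma toC_mul a b : toC (Cmul a b) = toC a * toC b. Proof. by []. Qed.
Lemma toC_sub a b : toC (Csub a b) = toC a - toC b. Proof. by []. Qed.
Lemma toC_C0 : toC C0 = 0. Proof. by []. Qed.
Lemma toC_C1 : toC C1 = 1. Proof. by []. Qed.

Lemma toC_inj a b : toC a = toC b -> a = b.
Proof. case: a => a1 a2; case: b => b1 b2; rewrite /toC /=. by case=> -> ->. Qed.

Lemma toC_surj (z : R[i]) : exists a, toC a = z.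
Proof. case: z => x y. by exists (x, y). Qed.

Lemma toC_pow a n : toC (Cpow a n) = toC a ^+ n.
Proof. elim: n => [|n IH]; first by rewrite expr0. by rewrite exprS -IH -toC_mul. Qed.

Lemma toC_peval Q u : toC (peval Q u) = (Poly (map toC Q)).[toC u].
Proof.
  elim: Q => [|c Q IH] /=; first by rewrite horner0 toC_C0.
  by rewrite horner_cons toC_add toC_mul IH addrC mulrC.
Qed.

Lemma Lpoly_horner (F : finFieldType) (chi : {poly F} -> Cx) d u :
  toC (Lpoly chi d u) = (\poly_(i < d) toC (Lcoef chi i)).[toC u].
Proof.
  rewrite horner_poly /Lpoly (big_morph toC toC_add toC_C0).
  apply: eq_bigr => i _. by rewrite toC_mul toC_pow.
Qed.

(* Its constant coefficient is chi(1), the only monic polynomial of degree 0. *)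
Lemma Lcoef0 (F : finFieldType) (chi : {poly F} -> Cx) : toC (Lcoef chi 0) = toC (chi 1).
Proof.
  rewrite /Lcoef (big_morph toC toC_add toC_C0).
  have e : forall f : {ffun 'I_0 -> F}, monic_of f = 1.
  { move=> f. by rewrite /monic_of big_ord0 expr0 addr0. }
  under eq_bigr => f _ do rewrite e.
  by rewrite sumr_const card_ffun card_ord expn0 mulr1n.
Qed.

Lemma poly_eq_of_horner (p q : {poly R[i]}) : (forall x, p.[x] = q.[x]) -> p = q.
Proof.
  move=> H. apply/eqP; rewrite -subr_eq0; apply/negPn/negP => hr.
  have h1 : all (root (p - q)) [seq i%:R | i <- iota 0 (size (p - q))].
  { apply/allP => x /mapP [i _ ->]. by rewrite /root hornerD hornerN H subrr. }
  have h2 : uniq [seq (i%:R : R[i]) | i <- iota 0 (size (p - q))].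
  { rewrite map_inj_uniq ?iota_uniq // => i j /eqP. by rewrite eqr_nat => /eqP. }
  have := max_poly_roots hr h1 h2. by rewrite size_map size_iota ltnn.
Qed.

Lemma dvdp_inverse_zero (p pQ : {poly R[i]}) (a : R[i]) m :
  a != 0 -> p = (1 - a *: 'X) ^+ m * pQ -> ('X - (a^-1)%:P) ^+ m %| p.
Proof.
  move=> ha ->.
  have e : 1 - a *: 'X = (- a) *: ('X - (a^-1)%:P).
  { by rewrite scalerBr scaleNr scaleNr opprK scale_polyC mulfV // polyC1 addrC. }
  rewrite e exprZn -scalerAl scalerAr. apply: dvdp_mulIl.
Qed.

Lemma sum_root_multiplicities (l : list (R[i] * nat)%type) (p : {poly R[i]}) : p != 0 ->
  uniq (map fst l) -> (forall x, x \in l -> ('X - x.1%:P) ^+ x.2 %| p) ->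
  leq (\big[addn/O]_(x <- l) x.2) (size p).-1.
Proof.
  elim: l p => [|[u m] l IH] p hp /= hu hd; first by rewrite big_nil.
  move/andP: hu => [hul hu]. rewrite big_cons /=.
  have hdu := hd (u, m) (mem_head _ _). rewrite /= in hdu.
  set D := ('X - u%:P) ^+ m in hdu.
  have ep : p = p %/ D * D by rewrite divpK.
  have hp' : p %/ D != 0 by apply: contraNneq hp => h; rewrite ep h mul0r.
  have hD : D \is monic by apply: monic_exp; apply: monicXsubC.
  have hs : size p = (size (p %/ D) + m.+1).-1.
  { by rewrite {1}ep size_Mmonic // size_exp_XsubC. }
  have hsz : leq 1 (size (p %/ D)) by rewrite size_poly_gt0.
  suff : leq (\big[addn/O]_(x <- l) x.2) (size (p %/ D)).-1 by rewrite hs; lia.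
  apply: IH => // x hx.
  have hc : coprimep (('X - x.1%:P) ^+ x.2) D.
  { apply: coprimep_expl. apply: coprimep_expr. apply: coprimep_XsubC2.
    rewrite subr_eq0. apply/eqP => hux. move: hul. rewrite hux.
    by move/negP; apply; apply: map_f. }
  rewrite -(Gauss_dvdpl _ hc) -ep. apply: hd. by rewrite inE hx orbT.
Qed.

Lemma In_mem {T : eqType} (x : T) (l : list T) : In x l <-> x \in l.
Proof.
  elim: l => [|a l IH] /=; first by split.
  rewrite inE; split.
  - case=> [->|h]; first by rewrite eqxx. by rewrite (proj1 IH h) orbT.
  - case/orP=> [/eqP->|h]; [by left|right; exact: (proj2 IH h)].
Qed.

Lemma uniq_map_In {T : eqType} (h : (R * nat)%type -> T) zs :
  NoDup (map fst zs) ->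
  (forall a b, In a zs -> In b zs -> h a = h b -> fst a = fst b) -> uniq (map h zs).
Proof.
  elim: zs => [|a zs IH] //= hnd hinj.
  inversion hnd as [|x y hni hnd' e]; subst.
  apply/andP; split.
  - apply/negP => /mapP [b hb hab].
    have hb' : In b zs by apply/In_mem.
    have e := hinj a b (or_introl erefl) (or_intror hb') hab.
    apply: hni. rewrite e. exact: in_map.
  - apply: IH => // x y hx hy. apply: hinj; by right.
Qed.

Lemma zero_multiplicities_le (F : finFieldType) (chi : {poly F} -> Cx) (d : nat)
    (q : R) (zs : list (R * nat)) :
  leq 1 d -> chi 1 <> C0 -> zero_data (Lpoly chi d) q zs ->
  (forall a b, In a zs -> In b zs -> fst a <> fst b -> alpha_of q (fst a) <> alpha_of q (fst b)) ->
  leq (\big[addn/O]_(x <- zs) x.2) d.-1.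
Proof.
  move=> hd hchi [hnd [hz _]] hdist.
  set pL := \poly_(i < d) toC (Lcoef chi i).
  have hpL : pL != 0.
  { apply/eqP => h. have := congr1 (fun p : {poly R[i]} => p`_0) h.
    rewrite coef_poly hd coef0 Lcoef0 -toC_C0 => /toC_inj. exact: hchi. }
  have hs : leq (size pL) d by apply: size_poly.
  suff : leq (\big[addn/O]_(x <- [seq ((toC (alpha_of q x.1))^-1, x.2) | x <- zs]) x.2) (size pL).-1.
  { rewrite big_map /=. move: (size pL) hs => sp. move: (\big[addn/O]_(x <- zs) x.2) => s. lia. }
  apply: sum_root_multiplicities => //.
  - rewrite List.map_map. apply: uniq_map_In => // a b ha hb /= hab.
    apply: NNPP => hne. apply: (hdist a b ha hb hne). apply: toC_inj. exact: (invr_inj hab).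
  - move=> x /mapP [[g m] hgm ->] /=.
    have [_ [_ [[u [hu _]] [Q [hQ _]]]]] := hz g m (proj2 (In_mem _ _) hgm).
    set a := toC (alpha_of q g).
    have ha : a != 0.
    { apply/eqP => h0. have := congr1 toC hu. rewrite toC_mul -/a h0 mul0r toC_C1.
      by move/eqP; rewrite eq_sym oner_eq0. }
    apply: (dvdp_inverse_zero _ (Poly (map toC Q))) => //.
    apply: poly_eq_of_horner => y. have [v <-] := toC_surj y.
    rewrite -Lpoly_horner hQ toC_mul toC_pow toC_sub toC_mul toC_C1 toC_peval.
    by rewrite hornerM horner_exp hornerD hornerN hornerZ hornerX hornerC.
Qed.
End MultiplicityBound.

Lemma multiplicity_sum_le (F : finFieldType) (chi : {poly F} -> Cx) (d : nat)
    (q : R) (zs : list (R * nat)) :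
  (1 <= d)%nat -> chi (GRing.one _) <> C0 -> zero_data (Lpoly chi d) q zs ->
  (forall a b, In a zs -> In b zs -> fst a <> fst b -> alpha_of q (fst a) <> alpha_of q (fst b)) ->
  rsum zs (fun a => INR (snd a)) <= INR d.
Proof.
  move=> hd hchi hz hdist. have h := @zero_multiplicities_le F chi d q zs hd hchi hz hdist.
  have -> : rsum zs (fun a => INR (snd a)) = INR (\big[addn/O]_(x <- zs) x.2).
  { elim: zs {hz hdist h} => [|a zs IH]; first by rewrite big_nil.
    by rewrite big_cons rsum_cons plus_INR IH. }
  apply: INR_leq. lia.
Qed.

Lemma convolution_error_bound q n p zs gam : 0 <= q -> (2 <= n)%nat -> 0 < gam ->
  NoDup (map fst zs) ->
  (forall a b, In a zs -> In b zs -> fst a <> fst b ->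
     2 * gam / 5 <= Cnorm (Csub C1 (cos (fst a - fst b), sin (fst a - fst b)))) ->
  Cnorm (Csub (Cscale (INR (S p)) (csum zs (fun a => csum zs (pair_conv q n p a))))
     (Cscale (INR (S (S p))) (csum zs (fun a => Cscale (INR (snd a) ^ S (S p) *
        ln (INR n) ^ S p / INR n) (Cpow (alpha_of q (fst a)) n)))))
  <= rsum zs (fun a => INR (snd a) ^ S (S p) * (sqrt q ^ n * (4 * INR (S (S p)) ^ 2 * (ln (INR n) ^ p / INR n)))
       + INR (S p) * rsum zs (fun b => INR (snd a) ^ S p * INR (snd b) *
           (sqrt q ^ n * (20 * ln (INR n) ^ p / (INR n * gam))))).
Proof.
  intros hq hn hg hnd hgap.
  have hs : 0 <= sqrt q ^ n by apply pow_le, sqrt_pos.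
  have hB2 : 0 <= 20 * ln (INR n) ^ p / (INR n * gam).
  { have := n_ge2 n hn. have := Lp_ge0 n p hn. intros.
    apply Rmult_le_pos; [lra|apply Rlt_le, Rinv_0_lt_compat; nra]. }
  rewrite -!csum_scale -csum_sub.
  apply: Rle_trans; [apply Cnorm_csum|]. apply rsum_le_in => a ha.
  rewrite (csum_split zs (pair_conv q n p a) a hnd ha).
  rewrite (_ : forall Y D off c1 c2, Csub (Cscale c1 (Cadd Y off)) (Cscale c2 D) =
     Cadd (Csub (Cscale c1 Y) (Cscale c2 D)) (Cscale c1 off)); [|intros; cx_ring].
  apply: Rle_trans; [apply Cnorm_add|]. apply Rplus_le_compat.
  - destruct a as [g m]. apply: Rle_trans; [exact: diagonal_pair_estimate|]. right; cbn [snd]; ring.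
  - rewrite Cnorm_scale Rabs_pos_eq; [|apply pos_INR].
    apply Rmult_le_compat_l; [apply pos_INR|].
    apply: Rle_trans; [apply Cnorm_csum|]. apply rsum_le_in => b hb.
    destruct (Req_EM_T (fst b) (fst a)) as [e|ne].
    + rewrite Cnorm_C0. apply Rmult_le_pos; [|exact: Rmult_le_pos].
      apply Rmult_le_pos; [apply pow_le|]; apply pos_INR.
    + apply: Rle_trans; [apply: offdiagonal_pair_bound hq hn hg _|right; ring].
      apply hgap => //. by intros e; apply ne.
Qed.

Lemma pow_add_le u v r : 0 <= u -> 0 <= v -> u ^ S r + v ^ S r <= (u + v) ^ S r.
Proof.
  intros hu hv. induction r as [|r IH]; [simpl; lra|].
  have h1 : 0 <= u ^ S r by (apply pow_le; lra).
  have h2 : 0 <= v ^ S r by (apply pow_le; lra).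
  change ((u + v) ^ S (S r)) with ((u + v) * (u + v) ^ S r).
  change (u ^ S (S r)) with (u * u ^ S r). change (v ^ S (S r)) with (v * v ^ S r).
  have : (u + v) * (u ^ S r + v ^ S r) <= (u + v) * (u + v) ^ S r.
  { apply Rmult_le_compat_l; lra. }
  nra.
Qed.

Lemma rsum_pow_le {A} (l : list A) (x : A -> R) r :
  (forall a, In a l -> 0 <= x a) -> rsum l (fun a => x a ^ S r) <= (rsum l x) ^ S r.
Proof.
  induction l as [|a l IH]; intros h; [rewrite /rsum /= Rmult_0_l; lra|].
  rewrite !rsum_cons.
  have hs : 0 <= rsum l x by (apply rsum_ge0; intros; apply h; right; assumption).
  have := IH (fun b hb => h b (or_intror hb)).
  have := pow_add_le (x a) (rsum l x) r (h a (or_introl (Logic.eq_refl _))) hs. lra.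
Qed.

Lemma pair_moment_le (zs : list (R * nat)) D p c1 c2 : 0 <= c1 -> 0 <= c2 ->
  rsum zs (fun a => INR (snd a)) <= D ->
  rsum zs (fun a => INR (snd a) ^ S (S p) * c1
                    + INR (S p) * rsum zs (fun b => INR (snd a) ^ S p * INR (snd b) * c2))
  <= D ^ S (S p) * (c1 + INR (S p) * c2).
Proof.
  intros h1 h2 hD.
  set Sm := rsum zs (fun a => INR (snd a)) in hD *.
  have hpos : forall a, In a zs -> 0 <= INR (snd a) by (intros; apply pos_INR).
  have hS0 : 0 <= Sm by exact: rsum_ge0.
  have hDk : Sm ^ S (S p) <= D ^ S (S p) by (apply pow_incr; lra).
  have m2 : rsum zs (fun a => INR (snd a) ^ S (S p)) <= D ^ S (S p).
  { apply: Rle_trans; [exact: rsum_pow_le|exact hDk]. }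
  have m11 : rsum zs (fun a => INR (snd a) ^ S p) * Sm <= D ^ S (S p).
  { have : rsum zs (fun a => INR (snd a) ^ S p) <= Sm ^ S p by exact: rsum_pow_le.
    have : 0 <= rsum zs (fun a => INR (snd a) ^ S p) by (apply rsum_ge0 => a _; apply pow_le, pos_INR).
    rewrite (_ : Sm ^ S (S p) = Sm ^ S p * Sm) in hDk; [|simpl; ring]. nra. }
  rewrite rsum_add.
  rewrite (rsum_ext_in zs _ (fun a => c1 * INR (snd a) ^ S (S p))); [|intros; ring].
  rewrite (rsum_ext_in zs (fun a => INR (S p) * _) (fun a => (INR (S p) * c2 * Sm) * INR (snd a) ^ S p)).
  - rewrite !rsum_scale.
    have hp : 0 <= INR (S p) by apply pos_INR.
    have : c1 * rsum zs (fun a => INR (snd a) ^ S (S p)) <= c1 * D ^ S (S p).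
    { exact: Rmult_le_compat_l. }
    have : INR (S p) * c2 * (rsum zs (fun a => INR (snd a) ^ S p) * Sm) <= INR (S p) * c2 * D ^ S (S p).
    { apply Rmult_le_compat_l; [exact: Rmult_le_pos|exact m11]. }
    nra.
  - intros a _. rewrite (rsum_ext_in zs _ (fun b => (INR (snd a) ^ S p * c2) * INR (snd b))).
    + rewrite rsum_scale. rewrite -/Sm. ring.
    + intros; ring.
Qed.

Lemma main_term_factor p A B :
  Csub (Cscale ((-1) ^ p / INR (fact p)) A)
       (Cscale ((-1) ^ S (S p) * INR (S (S p)) / INR (fact (S p))) B)
  = Cscale ((-1) ^ p / INR (fact (S p))) (Csub (Cscale (INR (S p)) A) (Cscale (INR (S (S p))) B)).
Proof.
  have hf := INR_fact_neq_0 p.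
  have e : INR (fact (S p)) = INR (S p) * INR (fact p) by rewrite -mult_INR.
  have hs : INR (S p) <> 0 by (apply not_0_INR; lia).
  unfold Csub, Cadd, Copp, Cscale. rewrite e.
  apply injective_projections; simpl; field; split; assumption.
Qed.

Lemma convolution_error_total q n p zs gam D : 0 <= q -> (2 <= n)%nat -> 0 < gam ->
  NoDup (map fst zs) ->
  (forall a b, In a zs -> In b zs -> fst a <> fst b ->
     2 * gam / 5 <= Cnorm (Csub C1 (cos (fst a - fst b), sin (fst a - fst b)))) ->
  rsum zs (fun a => INR (snd a)) <= D ->
  Cnorm (Csub (Cscale (INR (S p)) (csum zs (fun a => csum zs (pair_conv q n p a))))
     (Cscale (INR (S (S p))) (csum zs (fun a => Cscale (INR (snd a) ^ S (S p) *
        ln (INR n) ^ S p / INR n) (Cpow (alpha_of q (fst a)) n)))))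
  <= D ^ S (S p) * (sqrt q ^ n * (4 * INR (S (S p)) ^ 2 * (ln (INR n) ^ p / INR n))
       + INR (S p) * (sqrt q ^ n * (20 * ln (INR n) ^ p / (INR n * gam)))).
Proof.
  intros hq hn hg hnd hgap hD.
  have hs : 0 <= sqrt q ^ n by apply pow_le, sqrt_pos.
  have hn2 := n_ge2 n hn. have hLp := Lp_ge0 n p hn.
  have hX : 0 <= ln (INR n) ^ p / INR n.
  { apply Rmult_le_pos; [lra|apply Rlt_le, Rinv_0_lt_compat; lra]. }
  apply: Rle_trans; [exact: (convolution_error_bound q n p zs gam hq hn hg hnd hgap)|].
  apply: pair_moment_le hD; apply Rmult_le_pos => //.
  - apply Rmult_le_pos; [|exact hX]. apply Rmult_le_pos; [lra|apply pow_le, pos_INR].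
  - apply Rmult_le_pos; [lra|apply Rlt_le, Rinv_0_lt_compat; nra].
Qed.

Lemma error_constant_bound n p gam s D : (2 <= n)%nat -> 0 < gam -> 0 <= s -> 0 <= D ->
  / INR (fact (S p)) * (D ^ S (S p) *
    (s * (4 * INR (S (S p)) ^ 2 * (ln (INR n) ^ p / INR n))
     + INR (S p) * (s * (20 * ln (INR n) ^ p / (INR n * gam)))))
  <= 20 * (INR (S (S p)) / INR (fact (S p))) *
     (D ^ S (S p) * (INR (S (S p)) + / gam) * s * ln (INR n) ^ p / INR n).
Proof.
  intros hn hg hs hD.
  have hn2 := n_ge2 n hn. have hLp := Lp_ge0 n p hn.
  set X := ln (INR n) ^ p / INR n.
  have hX : 0 <= X by (apply Rmult_le_pos; [exact hLp|apply Rlt_le, Rinv_0_lt_compat; lra]).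
  have hk : INR (S p) <= INR (S (S p)) by (rewrite [INR (S (S p))]S_INR; lra).
  have hk0 : 0 <= INR (S p) by apply pos_INR.
  have hig : 0 < / gam by apply Rinv_0_lt_compat.
  have errors : 4 * INR (S (S p)) ^ 2 * X + INR (S p) * (20 * X * / gam)
                <= 20 * INR (S (S p)) * (INR (S (S p)) + / gam) * X.
  { have : INR (S p) * (X * / gam) <= INR (S (S p)) * (X * / gam).
    { apply Rmult_le_compat_r; [apply Rmult_le_pos; lra|exact hk]. }
    have : 0 <= INR (S (S p)) * INR (S (S p)) * X by (apply Rmult_le_pos; [nra|exact hX]).
    rewrite (_ : INR (S (S p)) ^ 2 = INR (S (S p)) * INR (S (S p))); [lra|ring]. }
  have hf : 0 < / INR (fact (S p)) by apply Rinv_0_lt_compat, lt_0_INR, lt_O_fact.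
  have hDk : 0 <= D ^ S (S p) by exact: pow_le.
  rewrite (_ : 20 * ln (INR n) ^ p / (INR n * gam) = 20 * X * / gam); [|rewrite /X; field; lra].
  have := Rmult_le_compat_l (/ INR (fact (S p)) * (D ^ S (S p) * s)) _ _
    ltac:(apply Rmult_le_pos; [lra|exact: Rmult_le_pos]) errors.
  rewrite /X. unfold Rdiv. intros h. apply: Rle_trans; [|apply: Rle_trans; [exact h|]]; right; ring.
Qed.

Theorem lemma5p7 :
  exists K : R, forall (F : finFieldType) (M : {poly F}) (chi : {poly F} -> Cx)
    (k n : nat) (zs : list (R * nat)),
    let q := INR #|F| in
    let d := (size M).-1 in
    (1 <= d)%nat ->
    is_dirichlet_char M chi ->
    nontrivial_char M chi ->
    (2 <= k)%nat ->
    (2 <= n)%nat ->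
    zero_data (Lpoly chi d) q zs ->
    Cnorm (Csub
      (fold_right Cadd C0
         (map (fun n1 => Cmul (Zsum q zs (k - 1) n1) (Zsum q zs 1 (n - n1)))
              (List.seq 1 (n - 1))))
      (Cscale ((-1) ^ k * INR k / INR (fact (k - 1)))
         (fold_right Cadd C0
            (map (fun p => Cscale (INR (snd p) ^ k * ln (INR n) ^ (k - 1) / INR n)
                                  (Cpow (alpha_of q (fst p)) n)) zs))))
    <= K * (INR k / INR (fact (k - 1))) *
       (INR d ^ k * (INR k + / gamma_min zs) * sqrt q ^ n
        * ln (INR n) ^ (k - 2) / INR n).
Proof.
  exists 20. intros F M chi k n zs q d hd hchar _ hk hn hzd.
  destruct k as [|[|p]]; [lia|lia|].
  rewrite (_ : (p.+2 - 1)%nat = p.+1); [|lia]. rewrite (_ : (p.+2 - 2)%nat = p); [|lia].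
  have hq : 0 < q by apply lt_0_INR; apply/ltP/card_gt0P; exists (GRing.zero : F).
  have [hnd [hzeros _]] := hzd.
  have hz : forall a, In a zs -> - PI < fst a < PI /\ fst a <> 0.
  { intros [g m] ha. by have [? [? _]] := hzeros g m ha. }
  have hchi1 : chi (GRing.one _) <> C0 by apply (proj2 (proj2 (proj2 hchar) _)), coprime1p.
  have hmult := @multiplicity_sum_le F chi d q zs hd hchi1 hzd
    (fun a b ha hb => alpha_of_inj zs hz q a b hq ha hb).
  rewrite convolution_expansion // -/(csum _ _) main_term_factor Cnorm_scale.
  rewrite (_ : Rabs ((-1) ^ p / INR (fact (S p))) = / INR (fact (S p))); last first.
  { rewrite Rabs_mult -RPow_abs Rabs_Ropp Rabs_R1 pow1 Rabs_inv Rabs_pos_eq; [ring|apply pos_INR]. }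
  have hinvf : 0 <= / INR (fact p.+1) by apply Rlt_le, Rinv_0_lt_compat, lt_0_INR, lt_O_fact.
  have herr := convolution_error_total q n p zs (gamma_min zs) (INR d) (Rlt_le _ _ hq) hn
    (gamma_min_pos zs hz) hnd (zero_ratio_gap zs hz) hmult.
  apply: Rle_trans; [exact: Rmult_le_compat_l hinvf herr|].
  apply: error_constant_bound => //; [exact: gamma_min_pos|apply pow_le, sqrt_pos|apply pos_INR].
Qed.
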